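(* Let $f_0$ be an arithmetic function, let $m>1$ and $n\ge1$. Then $C_m(n)=C_{m-1}(n)\cdot L_n$; equivalently, for all $1\le k\le n$, \[c_m(n,k)=\sum_{i=k}^n\binom{i-1}{k-1}c_{m-1}(n,i).\]
   Context: An arithmetic function is a function $f_0:\{1,2,\ldots\}\to\mathbb{C}$. For $m\ge 1$, $f_m$ is the invert transform of $f_{m-1}$, i.e. $f_m(n)=f_{m-1}(n)+\sum_{i=1}^{n-1}f_{m-1}(i)f_m(n-i)$ for $n\ge1$. For $m\ge1$ the numbers $c_m(n,k)$, $0\le k\le n$, are defined by $c_m(0,0)=1$, $c_m(n,0)=0$ for $n\ge1$, and $c_m(n,k)=\sum_{i=1}^{n-k+1}f_{m-1}(i)\,c_m(n-i,k-1)$ for $1\le k\le n$. $C_m(n)$ is the $n\times n$ lower triangular matrix whose $(r,k)$ entry is $c_m(r,k)$ for $1\le k\le r\le n$ (and $0$ for $k>r$), and $L_n$ is the $n\times n$ lower triangular Pascal matrix whose $(r,k)$ entry is $\binom{r-1}{k-1}$. *)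

From HB Require Import structures.
From mathcomp Require Import all_boot all_order all_algebra.
From mathcomp Require Import complex.
From mathcomp Require Import reals.
Set Implicit Arguments. Unset Strict Implicit. Unset Printing Implicit Defensive.
Import Order.TTheory GRing.Theory Num.Theory.
Local Open Scope ring_scope.

(* Arithmetic functions are modelled as h : nat -> C; only values at
   positive arguments are ever used (the value at 0 is irrelevant). *)

Section Defs.
Variable C : comRingType.

(* inv_seq h n = [:: g 0; g 1; ...; g n] where g is the invert transform of h
   (g 0 is a dummy value 0). *)
Fixpoint inv_seq (h : nat -> C) (n : nat) : seq C :=
  match n with
  | 0 => [:: 0]
  | n'.+1 => let s := inv_seq h n' in
      rcons s (h n + \sum_(1 <= i < n) h i * nth 0 s (n - i))
  end.

(* invert transform: g(n) = h(n) + sum_{i=1}^{n-1} h(i) g(n-i) *)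
Definition invert (h : nat -> C) (n : nat) : C := nth 0 (inv_seq h n) n.

Definition fm (f0 : nat -> C) (m : nat) : nat -> C := iter m invert f0.

Fixpoint cc (g : nat -> C) (n k : nat) : C :=
  match k with
  | 0 => (n == 0)%:R
  | k'.+1 => \sum_(1 <= i < (n - k').+1) g i * cc g (n - i) k'
  end.

Definition cm (f0 : nat -> C) (m n k : nat) : C := cc (fm f0 m.-1) n k.

(* C_m(n): (r,k) entry c_m(r,k) for 1 <= k <= r <= n, 0 for k > r.
   Row/column indices i j : 'I_n stand for r = i+1, k = j+1. *)
Definition Cmat (f0 : nat -> C) (m n : nat) : 'M[C]_n :=
  \matrix_(i < n, j < n) (if (j <= i)%N then cm f0 m i.+1 j.+1 else 0).

Definition Lmat (n : nat) : 'M[C]_n :=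
  \matrix_(i < n, j < n) ('C(i, j))%:R.
End Defs.

(* Write G := sum_(i >= 1) f_(m-2)(i) x^i, so that c_(m-1)(n,k) is the
   coefficient of x^n in G^k.  The invert transform H of the coefficients of G
   satisfies H = G + G H, i.e. H = G / (1 - G), hence
     H^(k+1) = G^(k+1) / (1 - G)^(k+1) = sum_i 'C(i, k) G^(i+1),
   and comparing coefficients of x^n gives c_m(n,k+1) = sum_i 'C(i,k) c_(m-1)(n,i+1).
   Everything is computed with polynomials modulo x^(n+1): there G is nilpotent,
   so the geometric and binomial series above become finite sums. *)

From mathcomp Require Import all_boot all_algebra.
From mathcomp Require Import zify ring.
From mathcomp Require Import complex.
From mathcomp Require Import reals.
From Stdlib Require Import Setoid Morphisms.
Set Implicit Arguments. Unset Strict Implicit. Unset Printing Implicit Defensive.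
Import GRing.Theory.
Local Open Scope ring_scope.

Section CongruenceModulo.
Variables (R : comPzRingType) (d : R).

Definition eqmod (p q : R) : Prop := exists r, p = q + r * d.

Lemma eqmod_refl p : eqmod p p.
Proof. by exists 0; rewrite mul0r addr0. Qed.

Lemma eqmod_sym : Symmetric eqmod.
Proof. by move=> p q [r ->]; exists (- r); rewrite mulNr addrK. Qed.

Lemma eqmod_trans : Transitive eqmod.
Proof. by move=> p q s [r ->] [t ->]; exists (t + r); rewrite mulrDl addrA. Qed.

Lemma eqmodD : Proper (eqmod ==> eqmod ==> eqmod) +%R.
Proof. by move=> p p' [r ->] q q' [t ->]; exists (r + t); ring. Qed.

Lemma eqmodM : Proper (eqmod ==> eqmod ==> eqmod) *%R.
Proof.
by move=> p p' [r ->] q q' [t ->]; exists (r * q' + p' * t + r * t * d); ring.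
Qed.

Lemma eqmodX : Proper (eqmod ==> eq ==> eqmod) (@GRing.exp R).
Proof.
move=> p q pq _ k ->; elim: k => [|k IHk]; first exact: eqmod_refl.
by rewrite !exprS; apply: eqmodM.
Qed.

End CongruenceModulo.

Add Parametric Relation (R : comPzRingType) (d : R) : R (eqmod d)
  reflexivity proved by (@eqmod_refl R d)
  symmetry proved by (@eqmod_sym R d)
  transitivity proved by (@eqmod_trans R d) as eqmod_rel.
#[global] Existing Instances eqmodD eqmodM eqmodX.
#[global] Hint Resolve eqmod_refl : core.

Section InvertedSeries.
Variables (R : comPzRingType) (d y : R) (n : nat).
Hypothesis y_nil : eqmod d (y ^+ n.+1) 0.

Local Notation S := (\sum_(i < n.+1) y ^+ i).
Local Notation T k := (\sum_(i < n) 'C(i, k)%:R * y ^+ i.+1).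

Lemma eqmod_add_nil a b c : a + c * y ^+ n.+1 = b -> eqmod d a b.
Proof. by move=> <-; rewrite y_nil mulr0 addr0. Qed.

Lemma geometric_series : eqmod d ((1 - y) * S) 1.
Proof.
apply: (@eqmod_add_nil _ _ 1).
by rewrite mul1r -opprB mulNr -subrX1 opprB subrK.
Qed.

Lemma binomial_series0 : eqmod d ((1 - y) * T 0) y.
Proof.
apply: (@eqmod_add_nil _ _ 1); rewrite mul1r.
under eq_bigr do rewrite bin0 mul1r exprS.
by rewrite -mulr_sumr mulrCA -opprB mulNr -subrX1 exprS; ring.
Qed.

Lemma binomial_seriesS k : eqmod d ((1 - y) * T k.+1) (y * T k).
Proof.
apply: (@eqmod_add_nil _ _ 'C(n, k.+1)%:R).
have pascal : T k.+1 + 'C(n, k.+1)%:R * y ^+ n.+1 = y * T k.+1 + y * T k.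
  rewrite -(big_ord_recr n (fun i => 'C(i, k.+1)%:R * y ^+ i.+1)) big_ord_recl.
  rewrite /= mul0r add0r !mulr_sumr -big_split; apply: eq_bigr => i _ /=.
  by rewrite /bump /= add1n binS natrD exprS; ring.
by rewrite mulrBl mul1r addrAC pascal; ring.
Qed.

Lemma binomial_series k : eqmod d ((1 - y) ^+ k.+1 * T k) (y ^+ k.+1).
Proof.
elim: k => [|k IHk]; first by rewrite expr1 binomial_series0.
by rewrite exprSr -mulrA binomial_seriesS mulrCA IHk -exprS.
Qed.

Lemma invert_series_pow h k :
  eqmod d h (y + y * h) -> eqmod d (h ^+ k.+1) (T k).
Proof.
move=> h_inv.
have h_sub : eqmod d (h - y * h) y.
  by have := eqmodD h_inv (eqmod_refl d (- (y * h))); rewrite addrK.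
have h_geom : eqmod d h (y * S).
  transitivity (h * ((1 - y) * S)); first by rewrite geometric_series mulr1.
  by rewrite mulrA mulrBr mulr1 (mulrC h y) h_sub.
transitivity ((y * S) ^+ k.+1); first by rewrite h_geom.
transitivity ((1 - y) ^+ k.+1 * T k * S ^+ k.+1); first by rewrite exprMn binomial_series.
by rewrite mulrAC -exprMn geometric_series expr1n mul1r.
Qed.
End InvertedSeries.

Section GeneratingPolynomial.
Variable C : comNzRingType.

Definition gen_poly (a : nat -> C) (n : nat) : {poly C} :=
  \poly_(i < n.+1) (if i == 0%N then 0 else a i).

Lemma coef_gen_poly a n i :
  (gen_poly a n)`_i = if (0 < i <= n)%N then a i else 0.
Proof. by rewrite coef_poly ltnS; case: i => [|i]; rewrite ?if_same. Qed.

Lemma eqmod_XnP (N : nat) (p q : {poly C}) :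
  eqmod 'X^N p q <-> (forall i, (i < N)%N -> p`_i = q`_i).
Proof.
split=> [[r ->] i ltiN | eq_pq]; first by rewrite coefD coefMXn ltiN addr0.
exists (drop_poly N (p - q)); rewrite -[in LHS](subrK q p) addrC.
congr (_ + _); rewrite -[LHS](poly_take_drop N) [X in X + _](_ : _ = 0) ?add0r //.
apply/polyP=> i; rewrite coef_take_poly coefB coef0.
by case: ifP => // /eq_pq ->; rewrite subrr.
Qed.

Lemma gen_poly_pow_nil (a : nat -> C) n : eqmod 'X^(n.+1) (gen_poly a n ^+ n.+1) 0.
Proof.
have [r ->] : eqmod 'X^1 (gen_poly a n) 0.
  by apply/eqmod_XnP => -[|//] _; rewrite coef_gen_poly coef0.
by exists (r ^+ n.+1); rewrite !add0r exprMn -exprM mul1n.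
Qed.

Lemma size_inv_seq (h : nat -> C) n : size (inv_seq h n) = n.+1.
Proof. by elim: n => //= n IHn; rewrite size_rcons IHn. Qed.

Lemma nth_inv_seq (h : nat -> C) n j :
  (j <= n)%N -> nth 0 (inv_seq h n) j = invert h j.
Proof.
elim: n => [|n IHn]; first by rewrite leqn0 => /eqP ->.
rewrite leq_eqVlt => /predU1P[-> // | ltjn].
by rewrite /= nth_rcons size_inv_seq ltjn IHn.
Qed.

Lemma invert_recE (h : nat -> C) n : (0 < n)%N ->
  invert h n = h n + \sum_(1 <= i < n) h i * invert h (n - i).
Proof.
case: n => // n _; rewrite /invert /= nth_rcons size_inv_seq ltnn eqxx.
congr (_ + _); apply: eq_big_nat => i /andP[i_gt0 _].
by rewrite nth_inv_seq //; lia.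
Qed.

Lemma cc_small (a : nat -> C) n k : (n < k)%N -> cc a n k = 0.
Proof. by case: k => //= k ltnk; rewrite (_ : n - k = 0)%N ?big_geq //; lia. Qed.

Lemma cc_full_range (a : nat -> C) n k :
  cc a n k.+1 = \sum_(1 <= i < n.+1) a i * cc a (n - i) k.
Proof.
rewrite /= [RHS](big_cat_nat _ (n := (n - k).+1)) //=; last by rewrite ltnS leq_subr.
rewrite [X in _ = _ + X]big1_seq ?addr0 // => i /andP[_].
by rewrite mem_index_iota => /andP[? ?]; rewrite cc_small ?mulr0 //; lia.
Qed.

Lemma cc_coef a N n k : (n <= N)%N -> cc a n k = (gen_poly a N ^+ k)`_n.
Proof.
elim: k n => [|k IHk] n lenN; first by rewrite expr0 coef1.
rewrite cc_full_range exprS coefM.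
rewrite -(big_mkord xpredT (fun j => (gen_poly a N)`_j * (gen_poly a N ^+ k)`_(n - j))).
rewrite big_ltn // coef_gen_poly mul0r add0r.
apply: eq_big_nat => i /andP[i_gt0 ltin]; have leiN : (i <= N)%N by lia.
by rewrite coef_gen_poly i_gt0 leiN IHk //; lia.
Qed.

Lemma gen_poly_invert (g : nat -> C) n :
  eqmod 'X^(n.+1) (gen_poly (invert g) n)
    (gen_poly g n + gen_poly g n * gen_poly (invert g) n).
Proof.
apply/eqmod_XnP => i; rewrite ltnS => lein.
rewrite coefD coefM !coef_gen_poly lein andbT.
case: i lein => [|i] lein /=; first by rewrite big_ord1 !coef_gen_poly /= mul0r addr0.
rewrite invert_recE //; congr (_ + _).
rewrite -(big_mkord xpredT
  (fun j => (gen_poly g n)`_j * (gen_poly (invert g) n)`_(i.+1 - j))).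
rewrite [RHS]big_nat_recr // [in RHS]big_ltn // !coef_gen_poly /= subnn.
rewrite mul0r add0r mulr0 addr0.
apply: eq_big_nat => j /andP[j_gt0 ltji]; rewrite !coef_gen_poly j_gt0.
have lejn : (j <= n)%N by lia.
have : (0 < i.+1 - j <= n)%N by lia.
by rewrite lejn => ->.
Qed.

Lemma cc_invert (g : nat -> C) n k :
  cc (invert g) n k.+1 = \sum_(i < n) 'C(i, k)%:R * cc g n i.+1.
Proof.
have := invert_series_pow (gen_poly_pow_nil g n) k (gen_poly_invert g n).
move/eqmod_XnP/(_ n (ltnSn n)); rewrite -cc_coef // coef_sum => ->.
by apply: eq_bigr => i _; rewrite !mulr_natl coefMn -cc_coef.
Qed.
End GeneratingPolynomial.

Section InvertTransformMatrices.
Variables (C : comNzRingType) (f0 : nat -> C) (m : nat).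
Hypothesis m_gt1 : (1 < m)%N.

Lemma fm_pred : fm f0 m.-1 = invert (fm f0 m.-2).
Proof. by case: m m_gt1 => [|[|m']]. Qed.

Lemma cm_binomial n k : (1 <= k <= n)%N ->
  cm f0 m n k = \sum_(k <= i < n.+1) 'C(i.-1, k.-1)%:R * cm f0 m.-1 n i.
Proof.
case: k => // k /andP[_ ltkn]; rewrite /cm fm_pred cc_invert big_add1 /=.
rewrite -(big_mkord xpredT (fun i => 'C(i, k)%:R * cc (fm f0 m.-2) n i.+1)).
rewrite (big_cat_nat _ (n := k)) //= 1?ltnW //.
rewrite [X in X + _]big1_seq ?add0r // => i /andP[_].
by rewrite mem_index_iota => /andP[_ ltik]; rewrite bin_small ?mul0r.
Qed.

Lemma Cmat_binomial n : Cmat f0 m n = Cmat f0 m.-1 n *m Lmat C n.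
Proof.
apply/matrixP => i j; rewrite !mxE /cm fm_pred.
under eq_bigr do rewrite !mxE.
have -> : (if (j <= i)%N then cc (invert (fm f0 m.-2)) i.+1 j.+1 else 0)
          = cc (invert (fm f0 m.-2)) i.+1 j.+1.
  by case: leqP => // ltij; rewrite cc_small.
rewrite cc_invert (big_ord_widen _
  (fun l => 'C(l, j)%:R * cc (fm f0 m.-2) i.+1 l.+1) (ltn_ord i)) big_mkcond.
by apply: eq_bigr => l _; rewrite ltnS; case: ifP; rewrite ?mul0r // mulrC.
Qed.
End InvertTransformMatrices.

Theorem proposition6 (R : realType) (f0 : nat -> R[i]) (m n : nat) :
  (1 < m)%N -> (1 <= n)%N ->
  Cmat f0 m n = Cmat f0 m.-1 n *m Lmat _ n /\
  (forall k : nat, (1 <= k <= n)%N ->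
     cm f0 m n k = \sum_(k <= i < n.+1) ('C(i.-1, k.-1))%:R * cm f0 m.-1 n i).
Proof.
by move=> m_gt1 _; split=> [|k]; [exact: Cmat_binomial | exact: cm_binomial].
Qed.
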